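(* Let $j,a\in\mathbb{N}$, $r\in\mathbb{N}_0$, and $p$ a prime. Then \[c_j^{(r)}(p^a)=\binom{a+r-1}{j+r-1}.\]
   Context: For $j,n\in\mathbb{N}$, $c_j(n)$ is the number of ordered $j$-tuples of integers each $\ge 2$ with product $n$. The associated divisor functions are defined by $c_j^{(0)}=c_j$ and $c_j^{(r)}(n)=\sum_{m\mid n}c_j^{(r-1)}(m)$ for $r,n\in\mathbb{N}$. Binomial coefficients $\binom{N}{K}$ with $K>N\ge 0$ are $0$. *)

From mathcomp Require Import all_boot.
Set Implicit Arguments. Unset Strict Implicit. Unset Printing Implicit Defensive.

(* Each entry divides n, so for n >= 1 entries lie in [2, n]; we
   enumerate tuples with entries in 'I_(n.+1) (i.e. values 0..n).  For n >= 1
   this is exactly the set of all such tuples. *)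
Definition c (j n : nat) : nat :=
  #|[set t : {ffun 'I_j -> 'I_n.+1} |
      [forall i, 2 <= t i] && (\prod_(i < j) (t i : nat) == n)]|.

Fixpoint cr (j r n : nat) : nat :=
  match r with
  | 0 => c j n
  | r'.+1 => \sum_(m <- divisors n) cr j r' m
  end.

From mathcomp Require Import all_boot.

Set Implicit Arguments.
Unset Strict Implicit.
Unset Printing Implicit Defensive.

(* Splitting off the first factor d of a factorization of n leaves a
   factorization of n/d with one factor less, so
   c_{j+1}(n) = sum_{d | n, d >= 2} c_j(n/d).  At n = p^(b+1) this reads
   c_{j+1}(p^(b+1)) = sum_{k <= b} c_j(p^k), whence c_{j+1}(p^(b+1)) = C(b, j)
   by the hockey-stick identity.  Every further divisor sum is again a
   hockey-stick sum and raises both binomial indices by one. *)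

Lemma hockey_stick m i n :
  m <= i -> \sum_(k < n) 'C(k + m, i) = 'C(n + m, i.+1).
Proof.
move=> le_mi; elim: n => [|n IHn]; first by rewrite big_ord0 bin_small.
by rewrite big_ord_recr /= IHn addSn binS addnC.
Qed.

Lemma big_ord_divisors (F : nat -> nat) (P : pred nat) N n :
  0 < n <= N ->
  \sum_(x < N.+1 | P x && (x %| n)) F x = \sum_(d <- divisors n | P d) F d.
Proof.
case/andP=> n_gt0 le_nN.
rewrite -(big_mkord (fun x => P x && (x %| n))) -big_filter -[RHS]big_filter.
apply/perm_big/uniq_perm; rewrite ?filter_uniq ?iota_uniq ?divisors_uniq //.
move=> x; rewrite !mem_filter mem_index_iota -dvdn_divisors //.
case: (boolP (x %| n)) => [x_dvd_n|]; rewrite ?andbF //= andbT.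
by rewrite ltnS (leq_trans (dvdn_leq n_gt0 x_dvd_n) le_nN) andbT.
Qed.

Section Factorizations.

Variable N : nat.

Definition factorizations j n : {set {ffun 'I_j -> 'I_N.+1}} :=
  [set t : {ffun 'I_j -> 'I_N.+1} |
    [forall i, 2 <= t i] && (\prod_(i < j) (t i : nat) == n)].

Lemma card_factorizations0 n : #|factorizations 0 n| = (n == 1).
Proof.
have all_ge2 (t : {ffun 'I_0 -> 'I_N.+1}) : [forall i, 2 <= t i].
  by apply/forallP => -[].
have -> : factorizations 0 n = if n == 1 then setT else set0.
  by apply/setP => t; case: ifP; rewrite !inE big_ord0 all_ge2 eq_sym => ->.
by case: (n == 1); rewrite ?cardsT ?cards0 // card_ffun !card_ord.
Qed.

Definition cons_ffun j (x : 'I_N.+1) (g : {ffun 'I_j -> 'I_N.+1}) :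
    {ffun 'I_j.+1 -> 'I_N.+1} :=
  [ffun i => if unlift ord0 i is Some k then g k else x].

Definition uncons_ffun j (t : {ffun 'I_j.+1 -> 'I_N.+1}) :=
  (t ord0, [ffun k => t (lift ord0 k)]).

Lemma cons_ffunK j : cancel (fun u => @cons_ffun j u.1 u.2) (@uncons_ffun j).
Proof.
case=> x g; rewrite /uncons_ffun /= ffunE unlift_none; congr pair.
by apply/ffunP=> k; rewrite !ffunE liftK.
Qed.

Lemma uncons_ffunK j :
  cancel (@uncons_ffun j) (fun u => @cons_ffun j u.1 u.2).
Proof.
move=> t; apply/ffunP => i; rewrite ffunE.
by case: unliftP => [k ->|->] //=; rewrite ffunE.
Qed.

Lemma cons_ffun_factorizations j n x g : 0 < n ->
  (cons_ffun x g \in factorizations j.+1 n) =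
  [&& 2 <= x, x %| n & g \in factorizations j (n %/ x)].
Proof.
move=> n_gt0; rewrite !inE big_ord_recl ffunE unlift_none.
under eq_bigr do rewrite ffunE liftK.
have -> : [forall i, 2 <= cons_ffun x g i] = (2 <= x) && [forall k, 2 <= g k].
  apply/forallP/andP => [ge2 | [x_ge2 /forallP g_ge2] i].
    split; first by have := ge2 ord0; rewrite ffunE unlift_none.
    by apply/forallP => k; have := ge2 (lift ord0 k); rewrite ffunE liftK.
  by rewrite ffunE; case: unliftP.
case: (ltnP 1 x) => x_ge2 //=; case: (boolP (x %| n)) => [x_dvd_n | x_ndvd_n] /=.
  by rewrite -{1}(divnK x_dvd_n) mulnC eqn_pmul2r // (ltnW x_ge2).
apply/negbTE; apply: contra x_ndvd_n => /andP[_ /eqP <-].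
exact: dvdn_mulr.
Qed.

Lemma card_factorizationsS j n : 0 < n <= N ->
  #|factorizations j.+1 n| =
  \sum_(d <- divisors n | 2 <= d) #|factorizations j (n %/ d)|.
Proof.
move=> n_bound; have /andP[n_gt0 _] := n_bound.
rewrite -(big_ord_divisors _ _ n_bound) -sum1_card.
rewrite (reindex (fun u => @cons_ffun j u.1 u.2)) /=; last first.
  by exists (@uncons_ffun j) => u _; [apply: cons_ffunK | apply: uncons_ffunK].
rewrite big_mkcond -(pair_big xpredT xpredT
  (fun x (g : {ffun 'I_j -> 'I_N.+1}) =>
     if cons_ffun x g \in factorizations j.+1 n then 1 else 0)) /=.
rewrite [RHS]big_mkcond; apply: eq_bigr => x _.
under eq_bigr do rewrite cons_ffun_factorizations // andbA.
case: ((2 <= x) && (x %| n)); last by rewrite big1.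
by rewrite -sum1_card [RHS]big_mkcond.
Qed.

End Factorizations.

Lemma c_factorizations j n : c j n = #|factorizations n j n|.
Proof. by []. Qed.

Lemma divn_divisors_bound N n d :
  0 < n <= N -> d \in divisors n -> 0 < n %/ d <= N.
Proof.
case/andP=> n_gt0 le_nN; rewrite -dvdn_divisors // => d_dvd_n.
rewrite divn_gt0 ?(dvdn_gt0 n_gt0 d_dvd_n) // (dvdn_leq n_gt0 d_dvd_n) /=.
exact: leq_trans (leq_div n d) le_nN.
Qed.

Lemma c0 n : c 0 n = (n == 1).
Proof. by rewrite c_factorizations card_factorizations0. Qed.

(* [c j n] bounds the factors by [n] itself, whereas the tail of a
   factorization of [n] is a factorization of [n %/ d] with the bound [n]. *)
Lemma card_factorizations N j n :
  0 < n <= N -> #|factorizations N j n| = c j n.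
Proof.
elim: j N n => [|j IHj] N n n_bound.
  by rewrite c0 card_factorizations0.
have sum_c M : 0 < n <= M ->
    #|factorizations M j.+1 n| = \sum_(d <- divisors n | 2 <= d) c j (n %/ d).
  move=> n_boundM; rewrite (card_factorizationsS j n_boundM) big_seq_cond.
  rewrite [RHS]big_seq_cond; apply: eq_bigr => d /andP[d_div _].
  exact/IHj/(divn_divisors_bound n_boundM).
have /andP[n_gt0 _] := n_bound.
rewrite c_factorizations; apply: etrans (sum_c N n_bound) (esym (sum_c n _)).
by rewrite n_gt0 leqnn.
Qed.

Lemma cS j n : 0 < n ->
  c j.+1 n = \sum_(d <- divisors n | 2 <= d) c j (n %/ d).
Proof.
move=> n_gt0; have n_bound : 0 < n <= n by rewrite n_gt0 leqnn.
rewrite c_factorizations (card_factorizationsS j n_bound) big_seq_cond.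
rewrite [RHS]big_seq_cond; apply: eq_bigr => d /andP[d_div _].
exact/card_factorizations/(divn_divisors_bound n_bound).
Qed.

Lemma divisors_pexp p b :
  prime p -> perm_eq (divisors (p ^ b)) [seq p ^ k | k <- iota 0 b.+1].
Proof.
move=> p_pr; have p_gt1 := prime_gt1 p_pr.
apply: uniq_perm; first exact: divisors_uniq.
  by rewrite (map_inj_uniq (expnI p_gt1)) iota_uniq.
move=> d; rewrite -dvdn_divisors ?expn_gt0 ?prime_gt0 //.
apply/(dvdn_pfactor _ _ p_pr)/mapP => -[k le_kb ->]; exists k => //.
  by rewrite mem_iota.
by move: le_kb; rewrite mem_iota.
Qed.

Lemma big_divisors_pexp (F : nat -> nat) (P : pred nat) p b : prime p ->
  \sum_(d <- divisors (p ^ b) | P d) F d = \sum_(k < b.+1 | P (p ^ k)) F (p ^ k).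
Proof.
move=> p_pr; rewrite (perm_big _ (divisors_pexp b p_pr)) big_map.
by rewrite -[iota 0 b.+1]/(index_iota 0 b.+1) big_mkord.
Qed.

Lemma sum_cofactors_pexp (G : nat -> nat) p b : prime p ->
  \sum_(d <- divisors (p ^ b) | 2 <= d) G (p ^ b %/ d) = \sum_(k < b) G (p ^ k).
Proof.
move=> p_pr; have p_gt1 := prime_gt1 p_pr; have p_gt0 := ltnW p_gt1.
rewrite big_divisors_pexp // big_mkcond big_ord_recl expn0 /= add0n.
rewrite [RHS](reindex_inj rev_ord_inj); apply: eq_bigr => k _.
have k_lt_b := ltn_ord k; rewrite /bump add1n.
by rewrite (leq_ltn_trans (ltn0Sn k) (ltn_expl _ p_gt1)) -expnB.
Qed.

Lemma divisors1 : divisors 1 = [:: 1].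
Proof. by []. Qed.

Lemma cr_S1 j r : cr j.+1 r 1 = 0.
Proof.
elim: r => [|r IHr] /=; last by rewrite divisors1 big_seq1.
by rewrite cS // divisors1 big_cons big_nil.
Qed.

Lemma c_pexpS p j b : prime p -> c j.+1 (p ^ b.+1) = 'C(b, j).
Proof.
move=> p_pr; have p_gt1 := prime_gt1 p_pr.
have pb_gt0 k : 0 < p ^ k by rewrite expn_gt0 ltnW.
elim: j b => [|j IHj] b;
  rewrite cS // sum_cofactors_pexp // big_ord_recl expn0.
  rewrite c0 bin0 big1 // => k _.
  by rewrite c0 gtn_eqF // (leq_ltn_trans (ltn0Sn k) (ltn_expl _ p_gt1)).
rewrite (cr_S1 j 0 : c j.+1 1 = 0) add0n.
under eq_bigr do rewrite lift0 IHj -[X in 'C(X, _)]addn0.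
by rewrite hockey_stick // addn0.
Qed.

Lemma cr_pexpS p j r b : prime p -> cr j.+1 r (p ^ b.+1) = 'C(b + r, j + r).
Proof.
move=> p_pr; elim: r b => [|r IHr] b; first by rewrite !addn0; exact: c_pexpS.
rewrite /= big_divisors_pexp // big_ord_recl expn0 cr_S1 add0n.
under eq_bigr do rewrite lift0 IHr.
by rewrite (hockey_stick b.+1 (leq_addl j r)) addSnnS -addnS.
Qed.

Theorem lemma15 (j a r p : nat) :
  0 < j -> 0 < a -> prime p ->
  cr j r (p ^ a) = 'C(a + r - 1, j + r - 1).
Proof.
case: j => [|j] // _; case: a => [|a] // _ p_pr.
by rewrite cr_pexpS // !addSn !subn1.
Qed.
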